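(* Let $H$ be a real Hilbert space, $f:H\to\mathbb{R}\cup\{+\infty\}$ a proper lower semicontinuous function and $\bar x\in\operatorname{dom}f$ with $0\in\partial_pf(\bar x)$. Suppose that $\operatorname{qri}\big(N_M(\operatorname{gph}\partial_pf,(\bar x,0))\big)\ne\emptyset$ and $$\operatorname{qri}\big(\operatorname{dom}\partial^2_Mf(\bar x,0)\big)\subset-\operatorname{sqri}\big(\operatorname{dom}D^2_Mf(\bar x,0)\big).$$ Then if $f$ satisfies the second-order optimality condition of the second kind at $\bar x$, it satisfies the second-order optimality condition of the third kind at $\bar x$.
   Context: $S_H$ is the unit sphere of $H$; weak convergence is denoted $\stackrel{w}{\to}$. Proximal subdifferential: $\zeta\in\partial_p f(x)$ iff there exist $\sigma,\delta>0$ with $f(y)\ge f(x)+\langle\zeta,y-x\rangle-\frac{\sigma}{2}\|y-x\|^2$ whenever $\|y-x\|<\delta$. Mixed contingent cone: $(h,z)\in T_M(\operatorname{gph}\partial_pf,(\bar x,p))$ iff there exist $t_n\to0^+$, $h_n\to h$ in norm, $z_n\stackrel{w}{\to}z$ with $p+t_nz_n\in\partial_pf(\bar x+t_nh_n)$ for all $n$. $D^2_Mf(\bar x,p)(h):=\{z:(h,z)\in T_M(\operatorname{gph}\partial_pf,(\bar x,p))\}$. $N_M(\operatorname{gph}\partial_pf,(\bar x,p)):=\{(a,b):\langle a,h\rangle+\langle b,z\rangle\le0\ \forall(h,z)\in T_M(\operatorname{gph}\partial_pf,(\bar x,p))\}$; $\partial^2_Mf(\bar x,p)(h):=\{z:(z,-h)\in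 N_M(\operatorname{gph}\partial_pf,(\bar x,p))\}$. For a set-valued map $G$, $\operatorname{dom}G=\{h:G(h)\ne\emptyset\}$. $\operatorname{qri}A:=\{x\in A:\overline{\operatorname{cone}}(A-x)\text{ is a linear subspace}\}$, $\operatorname{sqri}A:=\{x\in A:\operatorname{cone}(A-x)\text{ is a closed linear subspace}\}$. Second kind condition at $\bar x$: $\exists\beta>0$ such that for every $h\in\operatorname{dom}D^2_Mf(\bar x,0)\cap S_H$ there is $z\in D^2_Mf(\bar x,0)(h)$ with $\langle z,h\rangle\ge\beta$. Third kind condition: $\exists\beta>0$ such that $\langle z,h\rangle\ge\beta$ for all $h\in S_H\cap\operatorname{dom}\partial^2_Mf(\bar x,0)$ and all $z\in\partial^2_Mf(\bar x,0)(h)$. *)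

From Stdlib Require Import Reals Lra.
Open Scope R_scope.

Record Hilbert := mkHilbert {
  hcar :> Type;
  hzero : hcar;
  hadd : hcar -> hcar -> hcar;
  hopp : hcar -> hcar;
  hscal : R -> hcar -> hcar;
  hinner : hcar -> hcar -> R;
  hadd_assoc : forall x y z, hadd x (hadd y z) = hadd (hadd x y) z;
  hadd_comm : forall x y, hadd x y = hadd y x;
  hadd_0_l : forall x, hadd hzero x = x;
  hadd_opp_r : forall x, hadd x (hopp x) = hzero;
  hscal_assoc : forall a b x, hscal a (hscal b x) = hscal (a * b) x;
  hscal_1 : forall x, hscal 1 x = x;
  hscal_distr_l : forall a x y, hscal a (hadd x y) = hadd (hscal a x) (hscal a y);
  hscal_distr_r : forall a b x, hscal (a + b) x = hadd (hscal a x) (hscal b x);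
  hinner_sym : forall x y, hinner x y = hinner y x;
  hinner_add_l : forall x y z, hinner (hadd x y) z = hinner x z + hinner y z;
  hinner_scal_l : forall a x y, hinner (hscal a x) y = a * hinner x y;
  hinner_pos : forall x, 0 <= hinner x x;
  hinner_def : forall x, hinner x x = 0 -> x = hzero;
  hcomplete : forall u : nat -> hcar,
    (forall eps, 0 < eps -> exists N, forall m n, (N <= m)%nat -> (N <= n)%nat ->
        hinner (hadd (u m) (hopp (u n))) (hadd (u m) (hopp (u n))) < eps) ->
    exists l, forall eps, 0 < eps -> exists N, forall n, (N <= n)%nat ->
        hinner (hadd (u n) (hopp l)) (hadd (u n) (hopp l)) < eps
}.

Arguments hzero {h}.
Arguments hadd {h}.
Arguments hopp {h}.
Arguments hscal {h}.
Arguments hinner {h}.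

Section HilbertDefs.
Variable H : Hilbert.

Definition hsub (x y : H) : H := hadd x (hopp y).
Definition hnorm (x : H) : R := sqrt (hinner x x).

Definition unit_sphere (h : H) : Prop := hnorm h = 1.

Definition cv_norm (u : nat -> H) (l : H) : Prop :=
  forall eps, 0 < eps -> exists N, forall n, (N <= n)%nat -> hnorm (hsub (u n) l) < eps.
Definition cv_weak (u : nat -> H) (l : H) : Prop :=
  forall w : H, Un_cv (fun n => hinner (u n) w) (hinner l w).

(** extended-real-valued functions H -> R ∪ {+∞}: None stands for +∞ *)
Definition ext_lt (r : R) (v : option R) : Prop :=
  match v with None => True | Some a => r < a end.
Definition ext_ge (v : option R) (r : R) : Prop :=
  match v with None => True | Some a => r <= a end.

Definition in_dom (f : H -> option R) (x : H) : Prop := exists a, f x = Some a.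
Definition proper (f : H -> option R) : Prop := exists x, in_dom f x.
Definition lsc (f : H -> option R) : Prop :=
  forall x r, ext_lt r (f x) ->
    exists delta, 0 < delta /\ forall y, hnorm (hsub y x) < delta -> ext_lt r (f y).

Definition prox_subdiff (f : H -> option R) (x zeta : H) : Prop :=
  exists a, f x = Some a /\
  exists sigma delta, 0 < sigma /\ 0 < delta /\
    forall y, hnorm (hsub y x) < delta ->
      ext_ge (f y) (a + hinner zeta (hsub y x)
                     - sigma / 2 * (hnorm (hsub y x)) ^ 2).

(** mixed contingent cone to gph ∂_p f at (xb, p) *)
Definition T_M (f : H -> option R) (xb p : H) (hz : H * H) : Prop :=
  exists (t : nat -> R) (hn zn : nat -> H),
    (forall n, 0 < t n) /\ Un_cv t 0 /\
    cv_norm hn (fst hz) /\ cv_weak zn (snd hz) /\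
    forall n, prox_subdiff f (hadd xb (hscal (t n) (hn n)))
                             (hadd p (hscal (t n) (zn n))).

Definition D2M (f : H -> option R) (xb p h z : H) : Prop := T_M f xb p (h, z).

Definition N_M (f : H -> option R) (xb p : H) (ab : H * H) : Prop :=
  forall hz, T_M f xb p hz ->
    hinner (fst ab) (fst hz) + hinner (snd ab) (snd hz) <= 0.

Definition d2M (f : H -> option R) (xb p h z : H) : Prop :=
  N_M f xb p (z, hopp h).

Definition sv_dom (G : H -> H -> Prop) (h : H) : Prop := exists z, G h z.

Definition cone_of (A : H -> Prop) (v : H) : Prop :=
  exists t a, 0 <= t /\ A a /\ v = hscal t a.
Definition shift (A : H -> Prop) (x : H) (v : H) : Prop :=
  exists a, A a /\ v = hsub a x.
Definition closure (A : H -> Prop) (v : H) : Prop :=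
  forall eps, 0 < eps -> exists w, A w /\ hnorm (hsub v w) < eps.
Definition is_closed (A : H -> Prop) : Prop := forall v, closure A v -> A v.
Definition lin_subspace (A : H -> Prop) : Prop :=
  A hzero /\ (forall x y, A x -> A y -> A (hadd x y)) /\
  (forall t x, A x -> A (hscal t x)).
Definition qri (A : H -> Prop) (x : H) : Prop :=
  A x /\ lin_subspace (closure (cone_of (shift A x))).
Definition sqri (A : H -> Prop) (x : H) : Prop :=
  A x /\ is_closed (cone_of (shift A x)) /\ lin_subspace (cone_of (shift A x)).

Definition padd (u v : H * H) : H * H := (hadd (fst u) (fst v), hadd (snd u) (snd v)).
Definition pscal (t : R) (u : H * H) : H * H := (hscal t (fst u), hscal t (snd u)).
Definition psub (u v : H * H) : H * H := (hsub (fst u) (fst v), hsub (snd u) (snd v)).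
Definition pzero : H * H := (hzero, hzero).
Definition cone_of2 (A : H * H -> Prop) (v : H * H) : Prop :=
  exists t a, 0 <= t /\ A a /\ v = pscal t a.
Definition shift2 (A : H * H -> Prop) (x : H * H) (v : H * H) : Prop :=
  exists a, A a /\ v = psub a x.
Definition closure2 (A : H * H -> Prop) (v : H * H) : Prop :=
  forall eps, 0 < eps -> exists w, A w /\
    hnorm (hsub (fst v) (fst w)) < eps /\ hnorm (hsub (snd v) (snd w)) < eps.
Definition lin_subspace2 (A : H * H -> Prop) : Prop :=
  A pzero /\ (forall x y, A x -> A y -> A (padd x y)) /\
  (forall t x, A x -> A (pscal t x)).
Definition qri2 (A : H * H -> Prop) (x : H * H) : Prop :=
  A x /\ lin_subspace2 (closure2 (cone_of2 (shift2 A x))).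

Definition second_kind (f : H -> option R) (xb : H) : Prop :=
  exists beta, 0 < beta /\
    forall h, sv_dom (D2M f xb hzero) h -> unit_sphere h ->
      exists z, D2M f xb hzero h z /\ beta <= hinner z h.
Definition third_kind (f : H -> option R) (xb : H) : Prop :=
  exists beta, 0 < beta /\
    forall h z, unit_sphere h -> sv_dom (d2M f xb hzero) h ->
      d2M f xb hzero h z -> beta <= hinner z h.

End HilbertDefs.

(* Fix the second-kind constant beta, a unit vector h with (z, -h) in N_M and a
   point (a, b) of qri N_M.  For lam > 0 the vector h - lam b lies in qri of the
   convex cone dom d2M (the image of N_M under (z, w) |-> -w), so by the
   inclusion hypothesis -(h - lam b) lies in dom D2M.  Since (z + lam a, -(h - lam b))
   is in the polar N_M of the cone T_M and D2M is positively homogeneous, the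
   second-kind condition gives
     beta |h - lam b|^2 <= <z + lam a, h - lam b>,
   and letting lam -> 0 yields beta <= <z, h>. *)

From Stdlib Require Import Reals Lra Psatz.
Open Scope R_scope.

Section HilbertBasics.
Variable H : Hilbert.

Lemma hadd_0_r (x : H) : hadd x hzero = x.
Proof. rewrite hadd_comm. apply hadd_0_l. Qed.

Lemma hinner_0_l (y : H) : hinner (@hzero H) y = 0.
Proof.
  assert (E := hinner_add_l H hzero hzero y). rewrite hadd_0_l in E. lra.
Qed.

Lemma hinner_opp_l (x y : H) : hinner (hopp x) y = - hinner x y.
Proof.
  assert (E := hinner_add_l H x (hopp x) y).
  rewrite hadd_opp_r, hinner_0_l in E. lra.
Qed.

Lemma hinner_ext (u v : H) : (forall w, hinner u w = hinner v w) -> u = v.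
Proof.
  intros Huv.
  assert (Hd : hadd u (hopp v) = hzero).
  { apply hinner_def. rewrite hinner_add_l, hinner_opp_l, (Huv (hadd u (hopp v))). ring. }
  rewrite <- (hadd_0_r u), <- (hadd_opp_r H v), (hadd_comm H v), hadd_assoc, Hd.
  apply hadd_0_l.
Qed.

End HilbertBasics.

(* Vector identities are proved by testing against an arbitrary vector. *)
Ltac inner_expand := repeat (first [rewrite hinner_add_l | rewrite hinner_scal_l
   | rewrite hinner_opp_l | rewrite hinner_0_l]).
Ltac vec_ring := apply hinner_ext; intro; unfold hsub; inner_expand; ring.
Ltac vec_field := apply hinner_ext; intro; unfold hsub; inner_expand; field.

Section HilbertNorm.
Variable H : Hilbert.

Lemma hinner_add_r (x y z : H) : hinner x (hadd y z) = hinner x y + hinner x z.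
Proof. rewrite !(hinner_sym H x). apply hinner_add_l. Qed.

Lemma hinner_scal_r a (x y : H) : hinner x (hscal a y) = a * hinner x y.
Proof. rewrite !(hinner_sym H x). apply hinner_scal_l. Qed.

Lemma hinner_opp_r (x y : H) : hinner x (hopp y) = - hinner x y.
Proof. rewrite !(hinner_sym H x). apply hinner_opp_l. Qed.

Lemma hinner_0_r (x : H) : hinner x hzero = 0.
Proof. rewrite (hinner_sym H x). apply hinner_0_l. Qed.

Lemma hnorm_ge0 (x : H) : 0 <= hnorm H x.
Proof. apply sqrt_pos. Qed.

Lemma hnorm_sqr (x : H) : hnorm H x * hnorm H x = hinner x x.
Proof. apply sqrt_sqrt, hinner_pos. Qed.

Lemma hnorm_scal t (x : H) : hnorm H (hscal t x) = Rabs t * hnorm H x.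
Proof.
  unfold hnorm. rewrite hinner_scal_l, hinner_scal_r.
  replace (t * (t * hinner x x)) with (Rsqr t * hinner x x) by (unfold Rsqr; ring).
  rewrite sqrt_mult by (apply Rle_0_sqr || apply hinner_pos).
  rewrite sqrt_Rsqr_abs. reflexivity.
Qed.

Lemma hnorm_opp (x : H) : hnorm H (hopp x) = hnorm H x.
Proof.
  replace (hopp x) with (hscal (-1) x) by vec_ring.
  rewrite hnorm_scal, Rabs_left by lra. ring.
Qed.

Lemma hnorm_sub_diag (v : H) : hnorm H (hsub H v v) = 0.
Proof.
  replace (hsub H v v) with (@hzero H) by vec_ring.
  unfold hnorm. rewrite hinner_0_l. apply sqrt_0.
Qed.

Lemma cauchy_schwarz (x y : H) : Rabs (hinner x y) <= hnorm H x * hnorm H y.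
Proof.
  destruct (Req_dec (hinner y y) 0) as [Hy0|Hy0].
  - apply hinner_def in Hy0. subst y. rewrite hinner_0_r, Rabs_R0.
    apply Rmult_le_pos; apply hnorm_ge0.
  - assert (Hy : 0 < hinner y y) by (pose proof (hinner_pos H y); lra).
    set (p := hinner x y).
    (* nonnegativity of |x + t y|^2 at the minimizing t *)
    set (t := - p / hinner y y).
    assert (Q := hinner_pos H (hadd x (hscal t y))).
    rewrite hinner_add_l, !hinner_add_r, !hinner_scal_l, !hinner_scal_r,
      (hinner_sym H y x) in Q. fold p in Q.
    replace (hinner x x + t * p + (t * p + t * (t * hinner y y)))
      with ((hinner x x * hinner y y - p * p) / hinner y y) in Q
      by (unfold t; field; lra).
    assert (Hn : 0 <= hinner x x * hinner y y - p * p).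
    { apply Rmult_le_reg_r with (/ hinner y y); [apply Rinv_0_lt_compat; lra|].
      rewrite Rmult_0_l. exact Q. }
    rewrite <- sqrt_Rsqr_abs. unfold hnorm. rewrite <- sqrt_mult_alt by apply hinner_pos.
    apply sqrt_le_1_alt. unfold Rsqr. lra.
Qed.

Lemma hnorm_triangle (x y : H) : hnorm H (hadd x y) <= hnorm H x + hnorm H y.
Proof.
  pose proof (cauchy_schwarz x y). pose proof (Rle_abs (hinner x y)).
  pose proof (hnorm_ge0 x). pose proof (hnorm_ge0 y).
  pose proof (hnorm_sqr x). pose proof (hnorm_sqr y).
  unfold hnorm at 1.
  rewrite <- (sqrt_square (hnorm H x + hnorm H y)) by lra.
  apply sqrt_le_1_alt.
  rewrite hinner_add_l, !hinner_add_r, (hinner_sym H y x). nra.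
Qed.

End HilbertNorm.

Section Closure.
Variable H : Hilbert.

Definition convex_cone (A : H -> Prop) : Prop :=
  A hzero /\ (forall x y, A x -> A y -> A (hadd x y)) /\
  (forall t x, 0 <= t -> A x -> A (hscal t x)).

Lemma subset_closure (A : H -> Prop) v : A v -> closure H A v.
Proof. intros Av eps He. exists v. rewrite hnorm_sub_diag. auto. Qed.

Lemma closure_monotone (A B : H -> Prop) : (forall v, A v -> B v) ->
  forall v, closure H A v -> closure H B v.
Proof. intros AB v Hv eps He. destruct (Hv eps He) as [w [Aw Hw]]. eauto. Qed.

Lemma closure_closure (A : H -> Prop) v : closure H (closure H A) v -> closure H A v.
Proof.
  intros Hv eps He.
  destruct (Hv (eps/2)) as [w1 [C1 N1]]; [lra|].
  destruct (C1 (eps/2)) as [w2 [A2 N2]]; [lra|].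
  exists w2. split; auto.
  replace (hsub H v w2) with (hadd (hsub H v w1) (hsub H w1 w2)) by vec_ring.
  pose proof (hnorm_triangle H (hsub H v w1) (hsub H w1 w2)). lra.
Qed.

Lemma closure_add (A : H -> Prop) : (forall x y, A x -> A y -> A (hadd x y)) ->
  forall u v, closure H A u -> closure H A v -> closure H A (hadd u v).
Proof.
  intros Aadd u v Hu Hv eps He.
  destruct (Hu (eps/2)) as [w1 [A1 N1]]; [lra|].
  destruct (Hv (eps/2)) as [w2 [A2 N2]]; [lra|].
  exists (hadd w1 w2). split; auto.
  replace (hsub H (hadd u v) (hadd w1 w2)) with (hadd (hsub H u w1) (hsub H v w2))
    by vec_ring.
  pose proof (hnorm_triangle H (hsub H u w1) (hsub H v w2)). lra.
Qed.

Lemma closure_scal (A : H -> Prop) : (forall t x, 0 <= t -> A x -> A (hscal t x)) ->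
  forall t v, 0 <= t -> closure H A v -> closure H A (hscal t v).
Proof.
  intros Ascal t v Ht Hv eps He.
  assert (Hd : 0 < eps / (t + 1)) by (apply Rdiv_lt_0_compat; lra).
  destruct (Hv _ Hd) as [w [Aw Nw]].
  exists (hscal t w). split; auto.
  replace (hsub H (hscal t v) (hscal t w)) with (hscal t (hsub H v w)) by vec_ring.
  rewrite hnorm_scal, Rabs_pos_eq by lra.
  assert (t * hnorm H (hsub H v w) <= t * (eps / (t + 1)))
    by (apply Rmult_le_compat_l; lra).
  assert (t * (eps / (t + 1)) = eps - eps / (t + 1)) by (field; lra).
  lra.
Qed.

Lemma closure_opp (A : H -> Prop) : (forall v, A v -> closure H A (hopp v)) ->
  forall v, closure H A v -> closure H A (hopp v).
Proof.
  intros Aopp v Hv. apply closure_closure. intros eps He.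
  destruct (Hv eps He) as [w [Aw Nw]].
  exists (hopp w). split; auto.
  replace (hsub H (hopp v) (hopp w)) with (hopp (hsub H v w)) by vec_ring.
  rewrite hnorm_opp. exact Nw.
Qed.

Lemma closure_lin_subspace (A : H -> Prop) : convex_cone A ->
  (forall v, A v -> closure H A (hopp v)) -> lin_subspace H (closure H A).
Proof.
  intros [A0 [Aadd Ascal]] Aopp. split; [|split].
  - apply subset_closure, A0.
  - apply closure_add, Aadd.
  - intros t x Hx. destruct (Rle_lt_dec 0 t).
    + apply closure_scal; auto.
    + replace (hscal t x) with (hscal (-t) (hopp x)) by vec_ring.
      apply closure_scal; [auto|lra|]. apply closure_opp; auto.
Qed.

Lemma qri_closure_opp (A : H -> Prop) x v :
  qri H A x -> closure H (cone_of H (shift H A x)) v ->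
  closure H (cone_of H (shift H A x)) (hopp v).
Proof.
  intros [_ [_ [_ Lscal]]] Hv.
  replace (hopp v) with (hscal (-1) v) by vec_ring. auto.
Qed.

End Closure.

Section QuasiRelativeInterior.
Variable H : Hilbert.
Variable D : H -> Prop.
Hypothesis D_cone : convex_cone H D.

Lemma cone_shiftP x v : D x ->
  cone_of H (shift H D x) v <-> exists t, 0 <= t /\ D (hadd v (hscal t x)).
Proof.
  destruct D_cone as [_ [Dadd Dscal]]. intros Dx. split.
  - intros [t [a [Ht [[d [Dd ->]] ->]]]].
    exists t. split; auto.
    replace (hadd (hscal t (hsub H d x)) (hscal t x)) with (hscal t d) by vec_ring.
    auto.
  - (* v = (t+1) ((v + t x + x)/(t+1) - x) *)
    intros [t [Ht Dv]].
    set (d := hscal (/(t + 1)) (hadd (hadd v (hscal t x)) x)).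
    exists (t + 1), (hsub H d x). split; [lra|split].
    + exists d. split; [|reflexivity].
      apply Dscal; auto. left. apply Rinv_0_lt_compat. lra.
    + unfold d. vec_field. lra.
Qed.

Lemma convex_cone_cone_shift x : D x -> convex_cone H (cone_of H (shift H D x)).
Proof.
  intros Dx. destruct D_cone as [D0 [Dadd Dscal]].
  split; [|split].
  - apply cone_shiftP; auto. exists 0. split; [lra|].
    replace (hadd hzero (hscal 0 x)) with (@hzero H) by vec_ring. exact D0.
  - intros u v Hu Hv. apply cone_shiftP in Hu, Hv; auto. apply cone_shiftP; auto.
    destruct Hu as [t1 [H1 D1]], Hv as [t2 [H2 D2]].
    exists (t1 + t2). split; [lra|].
    replace (hadd (hadd u v) (hscal (t1 + t2) x)) with
      (hadd (hadd u (hscal t1 x)) (hadd v (hscal t2 x))) by vec_ring. auto.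
  - intros s v Hs Hv. apply cone_shiftP in Hv; auto. apply cone_shiftP; auto.
    destruct Hv as [t [Ht Dv]]. exists (s * t). split; [nra|].
    replace (hadd (hscal s v) (hscal (s * t) x)) with (hscal s (hadd v (hscal t x)))
      by vec_ring. auto.
Qed.

Lemma qri_add_scal c h lam : qri H D c -> D h -> 0 < lam ->
  qri H D (hadd h (hscal lam c)).
Proof.
  intros Qc Dh Hlam. destruct D_cone as [D0 [Dadd Dscal]].
  assert (Dc : D c) by apply Qc.
  set (x := hadd h (hscal lam c)).
  assert (Dx : D x) by (apply Dadd; auto; apply Dscal; auto; lra).
  assert (Kc_Kx : forall v, cone_of H (shift H D c) v -> cone_of H (shift H D x) v).
  { intros v Hv. apply cone_shiftP in Hv; auto. apply cone_shiftP; auto.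
    destruct Hv as [t [Ht Dv]].
    assert (Htl : 0 <= t / lam) by (unfold Rdiv; apply Rmult_le_pos; [lra | left; apply Rinv_0_lt_compat; lra]).
    exists (t / lam). split; auto.
    replace (hadd v (hscal (t / lam) x)) with
      (hadd (hadd v (hscal t c)) (hscal (t / lam) h)) by (unfold x; vec_field; lra).
    auto. }
  split; auto.
  apply closure_lin_subspace; [apply convex_cone_cone_shift; auto|].
  intros v Hv. pose proof Hv as Kv.
  apply cone_shiftP in Hv; auto. destruct Hv as [t [Ht Dd]].
  (* -v = t h - (d - lam t c) with d = v + t x, and d - lam t c lies in cone(D - c) *)
  replace (hopp v) with
    (hadd (hscal t h) (hopp (hsub H (hadd v (hscal t x)) (hscal (lam * t) c))))
    by (unfold x; vec_ring).
  apply closure_add; [apply convex_cone_cone_shift; auto| |].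
  - apply subset_closure, cone_shiftP; auto. exists 0. split; [lra|].
    replace (hadd (hscal t h) (hscal 0 x)) with (hscal t h) by vec_ring. auto.
  - apply (closure_monotone H _ _ Kc_Kx), qri_closure_opp; auto.
    apply subset_closure, cone_shiftP; auto. exists (lam * t). split; [nra|].
    replace (hadd (hsub H (hadd v (hscal t x)) (hscal (lam * t) c)) (hscal (lam * t) c))
      with (hadd v (hscal t x)) by vec_ring. exact Dd.
Qed.

End QuasiRelativeInterior.

Section ProductCones.
Variable H : Hilbert.
Variable N : H * H -> Prop.

Definition convex_cone2 : Prop :=
  N (pzero H) /\ (forall u v, N u -> N v -> N (padd H u v)) /\
  (forall t u, 0 <= t -> N u -> N (pscal H t u)).

(* For N = N_M this is dom d2M. *)
Definition image_opp_snd (h : H) : Prop := exists z, N (z, hopp h).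

Lemma convex_cone_image_opp_snd : convex_cone2 -> convex_cone H image_opp_snd.
Proof.
  intros [N0 [Nadd Nscal]]. split; [|split].
  - exists hzero. replace (hopp (@hzero H)) with (@hzero H) by vec_ring. exact N0.
  - intros x y [zx Hx] [zy Hy]. exists (hadd zx zy).
    replace (hopp (hadd x y)) with (hadd (hopp x) (hopp y)) by vec_ring.
    exact (Nadd _ _ Hx Hy).
  - intros t x Ht [z Hz]. exists (hscal t z).
    replace (hopp (hscal t x)) with (hscal t (hopp x)) by vec_ring.
    exact (Nscal _ _ Ht Hz).
Qed.

Lemma closure2_cone_image_opp_snd a b q :
  closure2 H (cone_of2 H (shift2 H N (a, b))) q ->
  closure H (cone_of H (shift H image_opp_snd (hopp b))) (hopp (snd q)).
Proof.
  intros Hq eps He. destruct (Hq eps He) as [w [Cw [_ Nw]]].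
  exists (hopp (snd w)). split.
  - destruct Cw as [s [_ [Hs [[[z' w'] [Nn ->]] ->]]]].
    exists s, (hsub H (hopp w') (hopp b)). split; auto. split.
    + exists (hopp w'). split; [|reflexivity].
      exists z'. replace (hopp (hopp w')) with w' by vec_ring. exact Nn.
    + unfold pscal, psub. simpl. vec_ring.
  - replace (hsub H (hopp (snd q)) (hopp (snd w))) with (hopp (hsub H (snd q) (snd w)))
      by vec_ring.
    rewrite hnorm_opp. exact Nw.
Qed.

Lemma qri2_image_opp_snd a b : convex_cone2 -> qri2 H N (a, b) ->
  qri H image_opp_snd (hopp b).
Proof.
  intros Ncone [Nab [_ [_ Lscal]]].
  assert (Dcone := convex_cone_image_opp_snd Ncone).
  assert (Db : image_opp_snd (hopp b)).
  { exists a. replace (hopp (hopp b)) with b by vec_ring. exact Nab. }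
  split; auto.
  apply closure_lin_subspace; [apply convex_cone_cone_shift; auto|].
  intros v [s [_ [Hs [[d [[z Hd] ->]] ->]]]].
  (* -v is the image of -1 times the element s ((z, -d) - (a, b)) of cone(N - (a, b)) *)
  set (p := pscal H s (psub H (z, hopp d) (a, b))).
  assert (Cp : closure2 H (cone_of2 H (shift2 H N (a, b))) (pscal H (-1) p)).
  { apply Lscal. intros eps He. exists p. split.
    - exists s, (psub H (z, hopp d) (a, b)). split; auto. split; [|reflexivity].
      exists (z, hopp d). auto.
    - rewrite !hnorm_sub_diag. lra. }
  replace (hopp (hscal s (hsub H d (hopp b)))) with (hopp (snd (pscal H (-1) p))).
  - exact (closure2_cone_image_opp_snd a b _ Cp).
  - unfold p, pscal, psub. simpl. vec_ring.
Qed.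

End ProductCones.

Section SecondOrder.
Variable H : Hilbert.
Variable f : H -> option R.
Variable xb : H.

Lemma convex_cone2_N_M : convex_cone2 H (N_M H f xb hzero).
Proof.
  split; [|split].
  - intros hz _. simpl. rewrite !hinner_0_l. lra.
  - intros u v Hu Hv hz Hz. specialize (Hu hz Hz). specialize (Hv hz Hz).
    simpl. rewrite !hinner_add_l. lra.
  - intros t u Ht Hu hz Hz. specialize (Hu hz Hz).
    simpl. rewrite !hinner_scal_l. nra.
Qed.

Lemma Un_cv_scal (u : nat -> R) l t : Un_cv u l -> Un_cv (fun n => t * u n) (t * l).
Proof.
  intros Hu. apply (CV_mult (fun _ => t) u t l); auto.
  intros eps He. exists 0%nat. intros n _. unfold R_dist. rewrite Rminus_diag, Rabs_R0. lra.
Qed.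

Lemma D2M_scal p h z t : 0 < t ->
  D2M H f xb p h z -> D2M H f xb p (hscal t h) (hscal t z).
Proof.
  intros Ht [tn [hn [zn [Hpos [Htn [Hh [Hz Hp]]]]]]].
  exists (fun n => / t * tn n), (fun n => hscal t (hn n)), (fun n => hscal t (zn n)).
  split; [|split; [|split; [|split]]].
  - intros n. apply Rmult_lt_0_compat; [apply Rinv_0_lt_compat; lra| auto].
  - replace 0 with (/ t * 0) by ring. apply Un_cv_scal; auto.
  - intros eps He. simpl in *. destruct (Hh (eps / t)) as [M HM].
    { apply Rdiv_lt_0_compat; lra. }
    exists M. intros n Hn. specialize (HM n Hn).
    replace (hsub H (hscal t (hn n)) (hscal t h)) with (hscal t (hsub H (hn n) h))
      by vec_ring.
    rewrite hnorm_scal, Rabs_pos_eq by lra.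
    apply Rmult_lt_compat_l with (r := t) in HM; [|lra].
    replace (t * (eps / t)) with eps in HM by (field; lra). exact HM.
  - intros w. simpl. rewrite hinner_scal_l.
    apply (Un_cv_ext (fun n => t * hinner (zn n) w)).
    + intros n. rewrite hinner_scal_l. reflexivity.
    + apply Un_cv_scal, Hz.
  - intros n.
    replace (hadd xb (hscal (/ t * tn n) (hscal t (hn n))))
      with (hadd xb (hscal (tn n) (hn n))) by (vec_field; lra).
    replace (hadd p (hscal (/ t * tn n) (hscal t (zn n))))
      with (hadd p (hscal (tn n) (zn n))) by (vec_field; lra).
    apply Hp.
Qed.

Lemma second_kind_polar_bound beta : 0 < beta ->
  (forall h, sv_dom H (D2M H f xb hzero) h -> unit_sphere H h ->
     exists z, D2M H f xb hzero h z /\ beta <= hinner z h) ->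
  forall h z, sv_dom H (D2M H f xb hzero) (hopp h) ->
    N_M H f xb hzero (z, hopp h) -> beta * hinner h h <= hinner z h.
Proof.
  intros Hbeta SK h z [w Hw] HN.
  destruct (Req_dec (hinner h h) 0) as [Hh0|Hh0].
  { apply hinner_def in Hh0. subst h. rewrite !hinner_0_r. lra. }
  set (n := hnorm H h).
  assert (Hn : 0 < n).
  { apply sqrt_lt_R0. pose proof (hinner_pos H h). lra. }
  assert (Hsq : n * n = hinner h h) by apply hnorm_sqr.
  set (u := hscal (/ n) (hopp h)).
  assert (Du : D2M H f xb hzero u (hscal (/ n) w))
    by (apply D2M_scal; auto; apply Rinv_0_lt_compat; auto).
  assert (Uu : unit_sphere H u).
  { unfold unit_sphere, u. rewrite hnorm_scal, hnorm_opp, Rabs_pos_eq.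
    - fold n. field. lra.
    - left. apply Rinv_0_lt_compat. auto. }
  destruct (SK u (ex_intro _ _ Du) Uu) as [z2 [Dz2 Bz2]].
  (* polarity of (z, -h) against (u, z2), combined with <z2, u> >= beta *)
  assert (Pol := HN (u, z2) Dz2). simpl in Pol.
  unfold u in Pol, Bz2.
  rewrite hinner_scal_r, hinner_opp_r, hinner_opp_l in Pol.
  rewrite hinner_scal_r, hinner_opp_r, (hinner_sym H z2 h) in Bz2.
  set (A := hinner z h) in *. set (B := hinner h z2) in *.
  assert (Pol' : - A - B * n <= 0).
  { replace (- A - B * n) with (n * (/ n * - A + - B)) by (field; lra).
    nra. }
  assert (Bn : beta * n <= - B).
  { apply Rmult_le_reg_l with (/ n); [apply Rinv_0_lt_compat; auto|].
    replace (/ n * (beta * n)) with beta by (field; lra). lra. }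
  rewrite <- Hsq. nra.
Qed.

End SecondOrder.

Lemma le_0_of_quadratic_bound d P Q :
  (forall lam, 0 < lam -> lam <= 1 -> d <= lam * P + lam * lam * Q) -> d <= 0.
Proof.
  intros Hd. destruct (Rle_lt_dec d 0) as [|Hpos]; auto. exfalso.
  set (M := Rabs P + Rabs Q + 1).
  assert (HM : 0 < M) by (unfold M; pose proof (Rabs_pos P); pose proof (Rabs_pos Q); lra).
  set (lam := Rmin 1 (d / (2 * M))).
  assert (H1 : 0 < lam).
  { apply Rmin_glb_lt; [lra|]. apply Rdiv_lt_0_compat; lra. }
  assert (H2 : lam <= 1) by apply Rmin_l.
  assert (H3 : lam * M <= d / 2).
  { replace (d / 2) with (d / (2 * M) * M) by (field; lra).
    apply Rmult_le_compat_r; [lra | apply Rmin_r]. }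
  specialize (Hd lam H1 H2).
  assert (lam * P <= lam * Rabs P) by (apply Rmult_le_compat_l; [lra| apply Rle_abs]).
  assert (lam * Q <= lam * Rabs Q) by (apply Rmult_le_compat_l; [lra| apply Rle_abs]).
  assert (0 <= lam * Rabs Q) by (apply Rmult_le_pos; [lra| apply Rabs_pos]).
  unfold M in H3. nra.
Qed.

Lemma le_of_perturbed_bound (H : Hilbert) (beta : R) (h z a c : H) :
  (forall lam, 0 < lam ->
     beta * hinner (hadd h (hscal lam c)) (hadd h (hscal lam c))
       <= hinner (hadd z (hscal lam a)) (hadd h (hscal lam c))) ->
  beta * hinner h h <= hinner z h.
Proof.
  intros Hlam.
  cut (beta * hinner h h - hinner z h <= 0); [lra|].
  apply (le_0_of_quadratic_bound _
    (hinner z c + hinner a h - beta * (hinner h c + hinner c h))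
    (hinner a c - beta * hinner c c)).
  intros lam Hl _. specialize (Hlam lam Hl).
  rewrite !hinner_add_l, !hinner_add_r, !hinner_scal_l, !hinner_scal_r in Hlam.
  nra.
Qed.

(* Properness, lower semicontinuity and 0 in the proximal subdifferential are
   standing assumptions of the paper; the argument does not use them, nor the
   closedness and subspace parts of sqri. *)
Theorem theorem4p2 (H : Hilbert) (f : H -> option R) (xb : H)
  (Hproper : proper H f) (Hlsc : lsc H f) (Hdom : in_dom H f xb)
  (H0 : prox_subdiff H f xb hzero)
  (Hqri : exists ab, qri2 H (N_M H f xb hzero) ab)
  (Hincl : forall h, qri H (sv_dom H (d2M H f xb hzero)) h ->
                     sqri H (sv_dom H (D2M H f xb hzero)) (hopp h)) :
  second_kind H f xb -> third_kind H f xb.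
Proof.
  intros [beta [Hbeta SK]]. exists beta. split; auto.
  intros h z Uh Dh Hz.
  destruct Hqri as [[a b] Qab].
  assert (Ncone := convex_cone2_N_M H f xb).
  assert (Nab : N_M H f xb hzero (a, b)) by apply Qab.
  assert (Hhh : hinner h h = 1).
  { rewrite <- hnorm_sqr. rewrite Uh. ring. }
  rewrite <- (Rmult_1_r beta), <- Hhh.
  apply (le_of_perturbed_bound H beta h z a (hopp b)). intros lam Hlam.
  apply (second_kind_polar_bound H f xb beta Hbeta SK).
  - apply Hincl, qri_add_scal; auto.
    + apply convex_cone_image_opp_snd, Ncone.
    + apply (qri2_image_opp_snd H _ a b); auto.
  - replace (hopp (hadd h (hscal lam (hopp b)))) with (hadd (hopp h) (hscal lam b))
      by vec_ring.
    destruct Ncone as [_ [Nadd Nscal]].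
    exact (Nadd _ _ Hz (Nscal lam _ (Rlt_le _ _ Hlam) Nab)).
Qed.
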